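(* Let $C\subseteq\mathbb{F}_q^n$ be a degenerated code. Then for any code $D\subseteq\mathbb{F}_q^n$, the code $C*D$ is degenerated.
   Context: Codes are $\mathbb{F}_q$-linear subspaces of $\mathbb{F}_q^n$; $C*D$ is the span of the componentwise products $\mathbf{c}*\mathbf{d}$. The stabiliser of a code $H$ is $\mathrm{Stab}(H)=\{\mathbf{x}\in\mathbb{F}_q^n:\mathbf{x}*H\subseteq H\}$. A code $H$ is degenerated if $\dim\mathrm{Stab}(H)>1$; equivalently (a known result), $H$ is a direct sum of nonzero subcodes with disjoint supports or every generator matrix of $H$ has a zero column. *)

From HB Require Import structures.
From mathcomp Require Import all_boot all_order all_algebra.
Set Implicit Arguments. Unset Strict Implicit. Unset Printing Implicit Defensive.
Import GRing.Theory.
Local Open Scope ring_scope.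

Definition code (F : finFieldType) (n : nat) := {vspace 'rV[F]_n}.

Definition cwprod (F : finFieldType) (n : nat) (x y : 'rV[F]_n) : 'rV[F]_n :=
  \row_i (x 0 i * y 0 i).

Definition schur (F : finFieldType) (n : nat) (C D : code F n) : code F n :=
  <<[seq cwprod x y | x <- [seq x <- enum [set: 'rV[F]_n] | x \in C],
                      y <- [seq y <- enum [set: 'rV[F]_n] | y \in D]]>>%VS.

(* Stab(H) = { x | x * H \subseteq H } (a subspace, here as its span) *)
Definition stab (F : finFieldType) (n : nat) (H : code F n) : code F n :=
  <<[seq x <- enum [set: 'rV[F]_n] |
      [forall h : 'rV[F]_n, (h \in H) ==> (cwprod x h \in H)]]>>%VS.

Definition degenerated (F : finFieldType) (n : nat) (H : code F n) : Prop :=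
  (1 < \dim (stab H))%N.

From mathcomp Require Import all_boot all_order all_algebra.
Set Implicit Arguments.
Unset Strict Implicit.
Unset Printing Implicit Defensive.
Import GRing.Theory.
Local Open Scope ring_scope.

(* Stab(C) is contained in Stab(C * D): for x in Stab(C) the generators of
   C * D satisfy x * (c * d) = (x * c) * d with x * c in C, so x stabilises
   C * D.  Hence dim Stab(C * D) >= dim Stab(C) > 1. *)

Section ComponentwiseProduct.

Variables (F : finFieldType) (n : nat).
Implicit Types (x y h : 'rV[F]_n) (X : seq 'rV[F]_n) (U C D H : code F n).

Lemma cwprodC x y : cwprod x y = cwprod y x.
Proof. by apply/rowP => i; rewrite !mxE mulrC. Qed.

Lemma cwprodA x y h : cwprod x (cwprod y h) = cwprod (cwprod x y) h.
Proof. by apply/rowP => i; rewrite !mxE mulrA. Qed.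

Lemma cwprod_diag_mx x h : cwprod x h = h *m diag_mx x.
Proof. by apply/rowP => i; rewrite mul_mx_diag !mxE mulrC. Qed.

Lemma cwprod_span_subv x X U :
  (forall y, y \in X -> cwprod x y \in U) ->
  forall h, h \in <<X>>%VS -> cwprod x h \in U.
Proof.
move=> XU h; rewrite -[X]/(tval (in_tuple X)) => /coord_span ->.
rewrite cwprod_diag_mx mulmx_suml; apply: rpred_sum => i _.
by rewrite -scalemxAl -cwprod_diag_mx rpredZ // XU // mem_nth.
Qed.

Lemma memv_stab H x :
  x \in stab H <-> (forall h, h \in H -> cwprod x h \in H).
Proof.
split=> [x_stab h hH | xH]; last first.
  rewrite memv_span // mem_filter mem_enum in_setT andbT.
  by apply/forallP => h; apply/implyP => /xH.
rewrite cwprodC; apply: cwprod_span_subv x_stab => y.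
rewrite mem_filter mem_enum in_setT andbT => /forallP/(_ h).
by rewrite hH cwprodC.
Qed.

Lemma mem_schur C D c d : c \in C -> d \in D -> cwprod c d \in schur C D.
Proof.
move=> cC dD; apply/memv_span/allpairs_f.
  by rewrite mem_filter mem_enum in_setT cC.
by rewrite mem_filter mem_enum in_setT dD.
Qed.

Lemma stab_subv_schur C D : (stab C <= stab (schur C D))%VS.
Proof.
apply/subvP => x /memv_stab x_stabC; apply/memv_stab/cwprod_span_subv.
move=> y /allpairsP [[c d] /= []].
rewrite !mem_filter => /andP [cC _] /andP [dD _] ->.
by rewrite cwprodA mem_schur ?x_stabC.
Qed.

End ComponentwiseProduct.

Theorem lemma6p5 (F : finFieldType) (n : nat) (C D : code F n) :
  degenerated C -> degenerated (schur C D).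
Proof.
rewrite /degenerated => dim_stabC.
exact: leq_trans dim_stabC (dimvS (stab_subv_schur C D)).
Qed.
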